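(* Let $X,Y\subset\mathbb{R}^d$ be bounded open sets with $X$ connected, and let $c:X\times Y\to\mathbb{R}$ be bounded from below and admit a modulus of continuity. Let $a\in\mathbb{R}$ and let $\psi$ be a subharmonic function on $X$ with values in $[a,\infty)$. Then $$Q_{\bar c}(\psi)=Q_{\bar c}\big(Q_{ce}(Q_{\bar c}(\psi))\big)\quad\text{and}\quad Q_{ce}(\psi)=Q_{ce}\big(Q_{\bar c}(Q_{ce}(\psi))\big).$$
   Context: For $g$ on $Y$: $Q_c(g)(x)=\inf_{y\in Y}\{g(y)+c(x,y)\}$ for $x\in X$; for $g$ on $X$: $Q_{\bar c}(g)(y)=\sup_{x\in X}\{g(x)-c(x,y)\}$ for $y\in Y$ (extended-real valued). For a function $g$ on $X$, its subharmonic envelope is $g_e=\sup\{\phi:\phi\text{ subharmonic on }X,\ \phi\le g\}$, and $Q_{ce}(g):=(Q_c(g))_e$. A function is subharmonic on $X$ if it is upper semicontinuous with values in $[-\infty,\infty)$ and satisfies the sub-mean-value inequality on every sphere whose ball lies in $X$. *)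

From HB Require Import structures.
From mathcomp Require Import all_boot all_order all_algebra.
From mathcomp Require Import all_classical all_reals all_analysis.
Set Implicit Arguments. Unset Strict Implicit. Unset Printing Implicit Defensive.
Import Order.TTheory GRing.Theory Num.Theory.
Import numFieldNormedType.Exports.
Local Open Scope classical_set_scope.
Local Open Scope ring_scope.

(* Euclidean space R^d is modelled by row vectors 'rV[R]_d (product topology,
   which is the Euclidean topology). *)

Definition enorm (R : realType) (d : nat) (v : 'rV[R]_d) : R :=
  Num.sqrt (\sum_(i < d) v ord0 i ^+ 2).

(* Iterated Lebesgue integral on R^d:  int ... int f(t_1,...,t_d) dt_1 ... dt_d
   (used only for nonnegative integrands, where it is the Lebesgue integral
   on R^d by Tonelli). *)
Fixpoint iint (R : realType) (d : nat) : ('rV[R]_d -> \bar R) -> \bar R :=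
  match d return ('rV[R]_d -> \bar R) -> \bar R with
  | 0 => fun f => f 0
  | d'.+1 => fun f =>
      (\int[@lebesgue_measure R]_(t in [set: R])
         iint (fun v : 'rV[R]_d' => f (row_mx (\row_(_ < 1) t) v)))%E
  end.

(* Normalized surface measure on the unit sphere is the push-forward
   of the normalized Lebesgue measure on the closed unit ball under the radial
   projection z |-> z/|z| (cone-measure definition), hence
   mean_{S(x,r)} f = (1/|B_1|) int_{B_1} f(x + r z/|z|) dz,
   where the integral is split into positive and negative parts. *)
Definition sphere_mean (R : realType) (d : nat) (f : 'rV[R]_d -> \bar R)
    (x : 'rV[R]_d) (r : R) : \bar R :=
  let g z := f (x + (r / enorm z) *: z) in
  let B z := enorm z <= 1 in
  let vol := iint (fun z => if B z then 1%E else 0%E) in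
  ((iint (fun z => if B z then maxe (g z) 0 else 0)
    - iint (fun z => if B z then maxe (- g z) 0 else 0))
   * ((fine vol)^-1)%:E)%E.

Definition usc_on (R : realType) (d : nat) (X : set 'rV[R]_d)
    (f : 'rV[R]_d -> \bar R) :=
  forall x, X x -> forall a : R, (f x < a%:E)%E ->
    exists2 V, nbhs x V & forall y, V y -> (f y < a%:E)%E.

Definition subharmonic (R : realType) (d : nat) (X : set 'rV[R]_d)
    (phi : 'rV[R]_d -> \bar R) : Prop :=
  [/\ forall x, X x -> (phi x < +oo)%E,
      usc_on X phi &
      forall x r, X x -> 0 < r ->
        [set y | enorm (y - x) <= r] `<=` X ->
        (phi x <= sphere_mean phi x r)%E].

Definition senv (R : realType) (d : nat) (X : set 'rV[R]_d)
    (g : 'rV[R]_d -> \bar R) : 'rV[R]_d -> \bar R :=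
  fun x => ereal_sup [set e | exists phi, [/\ subharmonic X phi,
                      (forall y, X y -> (phi y <= g y)%E) & e = phi x]].

Definition Qc (R : realType) (d : nat) (Y : set 'rV[R]_d)
    (c : 'rV[R]_d -> 'rV[R]_d -> R) (g : 'rV[R]_d -> \bar R) :
    'rV[R]_d -> \bar R :=
  fun x => ereal_inf [set (g y + (c x y)%:E)%E | y in Y].

Definition Qcbar (R : realType) (d : nat) (X : set 'rV[R]_d)
    (c : 'rV[R]_d -> 'rV[R]_d -> R) (g : 'rV[R]_d -> \bar R) :
    'rV[R]_d -> \bar R :=
  fun y => ereal_sup [set (g x - (c x y)%:E)%E | x in X].

Definition Qce (R : realType) (d : nat) (X Y : set 'rV[R]_d)
    (c : 'rV[R]_d -> 'rV[R]_d -> R) (g : 'rV[R]_d -> \bar R) :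
    'rV[R]_d -> \bar R :=
  senv X (Qc Y c g).

Definition has_modulus (R : realType) (d : nat) (X Y : set 'rV[R]_d)
    (c : 'rV[R]_d -> 'rV[R]_d -> R) : Prop :=
  exists omega : R -> R, omega t @[t --> 0^'+] --> 0 /\
    forall x x' y y', X x -> X x' -> Y y -> Y y' ->
      `|c x y - c x' y'| <= omega (enorm (x - x') + enorm (y - y')).

From HB Require Import structures.
From mathcomp Require Import all_boot all_order all_algebra.
From mathcomp Require Import all_classical all_reals all_analysis.
Import Order.TTheory GRing.Theory Num.Theory.
Import numFieldNormedType.Exports.
Local Open Scope classical_set_scope.
Local Open Scope ring_scope.

(* The transforms Q_c and Q_cbar are monotone and form a Galois connection
   (f <= Q_c Q_cbar f on X, Q_cbar Q_c g <= g on Y), and the subharmonic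
   envelope is monotone, below its argument and above every subharmonic
   minorant.  Both identities follow from these order properties alone: the
   only analytic input is that psi is itself a subharmonic minorant of
   Q_c Q_cbar psi. *)

Section CTransforms.
Variables (R : realType) (d : nat) (X Y : set 'rV[R]_d)
  (c : 'rV[R]_d -> 'rV[R]_d -> R).
Local Open Scope ereal_scope.

Lemma le_Qcbar f g y : (forall x, X x -> f x <= g x) ->
  Qcbar X c f y <= Qcbar X c g y.
Proof.
move=> fg; apply: ge_ereal_sup => _ [x Xx <-].
apply: (@le_trans _ _ (g x - (c x y)%:E)); first by rewrite leeD2r // fg.
by apply: ereal_sup_ubound; exists x.
Qed.

Lemma le_Qc f g x : (forall y, Y y -> f y <= g y) ->
  Qc Y c f x <= Qc Y c g x.
Proof.
move=> fg; apply: le_ereal_inf_tmp => _ [y Yy <-].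
apply: (@le_trans _ _ (f y + (c x y)%:E)); last by rewrite leeD2r // fg.
by apply: ereal_inf_lbound; exists y.
Qed.

Lemma le_Qc_Qcbar f x : X x -> f x <= Qc Y c (Qcbar X c f) x.
Proof.
move=> Xx; apply: le_ereal_inf_tmp => _ [y Yy <-].
by rewrite -leeBlDr //; apply: ereal_sup_ubound; exists x.
Qed.

Lemma Qcbar_Qc_le g y : Y y -> Qcbar X c (Qc Y c g) y <= g y.
Proof.
move=> Yy; apply: ge_ereal_sup => _ [x Xx <-].
by rewrite leeBlDr //; apply: ereal_inf_lbound; exists y.
Qed.

Lemma senv_le g x : X x -> senv X g x <= g x.
Proof. by move=> Xx; apply: ge_ereal_sup => _ [phi [_ phig ->]]; apply: phig. Qed.

Lemma subharmonic_le_senv g phi x : subharmonic X phi ->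
  (forall y, X y -> phi y <= g y) -> phi x <= senv X g x.
Proof. by move=> sphi phig; apply: ereal_sup_ubound; exists phi. Qed.

Lemma senv_le_senv f g x : (forall y, X y -> senv X f y <= g y) ->
  senv X f x <= senv X g x.
Proof.
move=> fg; apply: ge_ereal_sup => _ [phi [sphi phif ->]].
apply: subharmonic_le_senv => // y Xy.
exact: le_trans (subharmonic_le_senv f phi y sphi phif) (fg y Xy).
Qed.

Lemma le_senv f g x : (forall y, X y -> f y <= g y) ->
  senv X f x <= senv X g x.
Proof.
by move=> fg; apply: senv_le_senv => y Xy; apply: le_trans (senv_le f y Xy) (fg y Xy).
Qed.

Lemma Qcbar_Qce_le g y : Y y -> Qcbar X c (Qce X Y c g) y <= g y.
Proof.
move=> Yy; apply: le_trans (Qcbar_Qc_le g y Yy).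
by apply: le_Qcbar => x Xx; apply: senv_le.
Qed.

Lemma Qcbar_Qce_Qcbar psi y : subharmonic X psi -> Y y ->
  Qcbar X c (Qce X Y c (Qcbar X c psi)) y = Qcbar X c psi y.
Proof.
move=> spsi Yy; apply/eqP; rewrite eq_le Qcbar_Qce_le // andTb.
apply: le_Qcbar => x Xx; apply: subharmonic_le_senv => // z Xz.
exact: le_Qc_Qcbar.
Qed.

Lemma Qce_Qcbar_Qce g x :
  Qce X Y c (Qcbar X c (Qce X Y c g)) x = Qce X Y c g x.
Proof.
rewrite /Qce; apply/eqP; rewrite eq_le; apply/andP; split.
  by apply: le_senv => z _; apply: le_Qc => y Yy; apply: Qcbar_Qce_le.
by apply: senv_le_senv => z Xz; apply: le_Qc_Qcbar.
Qed.

End CTransforms.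

Theorem mainTheorem17 (R : realType) (d : nat) (X Y : set 'rV[R]_d)
    (c : 'rV[R]_d -> 'rV[R]_d -> R) (a : R) (psi : 'rV[R]_d -> \bar R) :
  open X -> open Y -> bounded_set X -> bounded_set Y -> connected X ->
  (exists m : R, forall x y, X x -> Y y -> m <= c x y) ->
  has_modulus X Y c ->
  subharmonic X psi -> (forall x, X x -> (a%:E <= psi x)%E) ->
  (forall y, Y y ->
     Qcbar X c psi y = Qcbar X c (Qce X Y c (Qcbar X c psi)) y) /\
  (forall x, X x ->
     Qce X Y c psi x = Qce X Y c (Qcbar X c (Qce X Y c psi)) x).
Proof.
move=> _ _ _ _ _ _ _ spsi _; split.
- by move=> y Yy; rewrite Qcbar_Qce_Qcbar.
- by move=> x _; rewrite Qce_Qcbar_Qce.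
Qed.
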